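(* Let $V$ be a finite ground set partitioned into groups $V_1,\dots,V_m$, $\alpha$ a nonnegative integer, $c$ a positive integer, $f:2^V\to\mathbb{R}_{\ge0}$ submodular, and let $OPT$ be an optimal solution of Problem P.2 (defined in the context). Let $z=\min_{i\in[m]}\lfloor|OPT\cap V_i|/2\rfloor$. Let $A^{P22}$ be any feasible solution of Problem P.2.2 and let $A^{\mathsf{final}}$ be obtained from it by the completion step described in the context. Then $A^{\mathsf{final}}$ is a feasible solution of Problem P.2.1, and hence of Problem P.2.
   Context: Problem P.2: maximize $f(S)$ over $S\subseteq V$ with $|S\cap V_i|-|S\cap V_j|\le\alpha$ for all $i,j\in[m]$ and $|S|\le c$. Problem P.2.1: maximize $f(S)$ subject to $z\le|S\cap V_i|\le z+\alpha$ for all $i\in[m]$ and $|S|\le c$. Problem P.2.2: maximize $f(S)$ subject to $|S\cap V_i|\le z+\alpha$ for all $i$ and $\sum_{i\in[m]}\max\{z,|S\cap V_i|\}\le c$. Completion step: let $L=\{i:|A^{P22}\cap V_i|<z\}$; for each $i\in L$ pick arbitrary disjoint $X_i,Y_i\subseteq V_i\setminus A^{P22}$ with $|X_i|=|Y_i|=z-|A^{P22}\cap V_i|$; let $A^1=A^{P22}\cup\bigcup_{i\in L}X_i$, $A^2=A^{P22}\cup\bigcup_{i\in L}Y_i$, and $A^{\mathsf{final}}$ is the one of $A^1,A^2$ with larger $f$-value. *)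

From mathcomp Require Import all_boot all_order all_algebra.
Set Implicit Arguments. Unset Strict Implicit. Unset Printing Implicit Defensive.
Import Order.TTheory GRing.Theory Num.Theory.

Section Defs.
Variables (T : finType) (m : nat) (grp : T -> 'I_m).

Definition Vg (i : 'I_m) : {set T} := [set x | grp x == i].

Definition feasP2 (alpha c : nat) (S : {set T}) : Prop :=
  (forall i j : 'I_m, #|S :&: Vg i| <= #|S :&: Vg j| + alpha)%N /\ (#|S| <= c)%N.

Definition feasP21 (alpha c z : nat) (S : {set T}) : Prop :=
  (forall i : 'I_m, z <= #|S :&: Vg i| <= z + alpha)%N /\ (#|S| <= c)%N.

Definition feasP22 (alpha c z : nat) (S : {set T}) : Prop :=
  (forall i : 'I_m, #|S :&: Vg i| <= z + alpha)%N /\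
  (\sum_(i < m) maxn z #|S :&: Vg i| <= c)%N.

(* z = min_i floor(|OPT ∩ V_i| / 2)  (the neutral element #|OPT| is an upper
   bound of every term, so for m > 0 this is exactly the minimum). *)
Definition zOf (OPT : {set T}) : nat :=
  \big[minn/#|OPT|]_(i < m) (#|OPT :&: Vg i| %/ 2).

Definition lowGroups (z : nat) (A : {set T}) : {set 'I_m} :=
  [set i | #|A :&: Vg i| < z]%N.
End Defs.

Definition submodular (T : finType) (R : realFieldType) (f : {set T} -> R) : Prop :=
  forall A B : {set T}, (f (A :|: B) + f (A :&: B) <= f A + f B)%R.

Definition nonneg_fun (T : finType) (R : realFieldType) (f : {set T} -> R) : Prop :=
  forall A : {set T}, (0 <= f A)%R.

(** Completing each low group of [A] up to [z] elements turns its count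
    [|A ∩ V_i|] into [max(z, |A ∩ V_i|)].  The P.2.2 constraints then say
    exactly that these counts lie in [[z, z + α]] and sum to at most [c], i.e.
    that the completion is P.2.1-feasible; P.2-feasibility follows because all
    counts lie in one window of width [α].  Neither the optimality of [OPT]
    nor the choice between the two completions plays any role. *)

From mathcomp Require Import all_boot all_order all_algebra.
Import Order.TTheory GRing.Theory Num.Theory.

Set Implicit Arguments.
Unset Strict Implicit.
Unset Printing Implicit Defensive.

Section Completion.
Variables (T : finType) (m : nat) (grp : T -> 'I_m).

Definition completion (z : nat) (A : {set T}) (W : 'I_m -> {set T}) :
    {set T} :=
  A :|: \bigcup_(i in lowGroups grp z A) W i.

Definition completes (z : nat) (A : {set T}) (W : 'I_m -> {set T}) : Prop :=
  forall i, i \in lowGroups grp z A ->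
    W i \subset Vg grp i :\: A /\ #|W i| = (z - #|A :&: Vg grp i|)%N.

Lemma card_sum_Vg (A : {set T}) : #|A| = (\sum_(i < m) #|A :&: Vg grp i|)%N.
Proof.
rewrite -sum1_card (partition_big grp predT) //=.
by apply: eq_bigr => i _; rewrite -sum1_card; apply: eq_bigl => x; rewrite !inE.
Qed.

Lemma bigcup_setI_Vg (L : {set 'I_m}) (W : 'I_m -> {set T}) (i : 'I_m) :
    (forall j, j \in L -> W j \subset Vg grp j) ->
  (\bigcup_(j in L) W j) :&: Vg grp i = if i \in L then W i else set0.
Proof.
move=> sWV; apply/setP => x; rewrite !inE; apply/andP/idP.
  case=> /bigcupP[j jL xW] /eqP gx.
  by move: (subsetP (sWV j jL) x xW); rewrite inE gx => /eqP->; rewrite jL.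
case: ifP => [iL xW | _]; last by rewrite inE.
split; first by apply/bigcupP; exists i.
by move: (subsetP (sWV i iL) x xW); rewrite inE.
Qed.

Lemma card_completion_Vg (z : nat) (A : {set T}) (W : 'I_m -> {set T})
    (i : 'I_m) :
    completes z A W ->
  #|completion z A W :&: Vg grp i| = maxn z #|A :&: Vg grp i|.
Proof.
move=> hW; rewrite setIUl bigcup_setI_Vg; last first.
  by move=> j /hW[sW _]; apply: subset_trans sW (subsetDl _ _).
case: ifP => [iL | iNL]; last first.
  rewrite setU0; apply/esym/maxn_idPr.
  by rewrite leqNgt; move: iNL; rewrite inE => ->.
have [sW cardW] := hW i iL.
have dis : [disjoint A :&: Vg grp i & W i].
  rewrite disjoint_sym disjoints_subset; apply: subset_trans sW _.
  by apply/subsetP => x; rewrite !inE => /andP[/negbTE-> _].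
move: dis; rewrite -(leq_card_setU (A :&: Vg grp i) (W i)).2 => /eqP->.
move: iL; rewrite inE cardW => /ltnW lowi.
by rewrite subnKC // (maxn_idPl lowi).
Qed.

Lemma completion_feasP21 (alpha c z : nat) (A : {set T})
    (W : 'I_m -> {set T}) :
    feasP22 grp alpha c z A -> completes z A W ->
  feasP21 grp alpha c z (completion z A W).
Proof.
move=> [capA sumA] hW; split => [i | ].
  by rewrite card_completion_Vg // leq_maxl geq_max leq_addr capA.
rewrite card_sum_Vg; apply: leq_trans sumA; apply/eq_leq/eq_bigr => i _.
exact: card_completion_Vg.
Qed.

Lemma feasP21_feasP2 (alpha c z : nat) (S : {set T}) :
  feasP21 grp alpha c z S -> feasP2 grp alpha c S.
Proof.
move=> [capS cardS]; split => // i j.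
have /andP[_ Si] := capS i; have /andP[Sj _] := capS j.
by apply: leq_trans Si _; rewrite leq_add2r.
Qed.

End Completion.

Theorem lemma15 (R : realFieldType) (T : finType) (m : nat) (grp : T -> 'I_m)
  (alpha c : nat) (f : {set T} -> R) (OPT : {set T}) (AP22 : {set T})
  (X Y : 'I_m -> {set T}) (Afinal : {set T}) :
  (0 < m)%N ->
  (0 < c)%N ->
  nonneg_fun f ->
  submodular f ->
  (* OPT is an optimal solution of P.2 *)
  feasP2 grp alpha c OPT ->
  (forall S : {set T}, feasP2 grp alpha c S -> (f S <= f OPT)%R) ->
  (* AP22 is feasible for P.2.2 with z = zOf OPT *)
  feasP22 grp alpha c (zOf grp OPT) AP22 ->
  (* completion step *)
  (forall i, i \in lowGroups grp (zOf grp OPT) AP22 ->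
     [/\ X i \subset Vg grp i :\: AP22, Y i \subset Vg grp i :\: AP22,
         [disjoint X i & Y i],
         #|X i| = (zOf grp OPT - #|AP22 :&: Vg grp i|)%N &
         #|Y i| = (zOf grp OPT - #|AP22 :&: Vg grp i|)%N]) ->
  let A1 := AP22 :|: \bigcup_(i in lowGroups grp (zOf grp OPT) AP22) X i in
  let A2 := AP22 :|: \bigcup_(i in lowGroups grp (zOf grp OPT) AP22) Y i in
  (Afinal = A1 /\ (f A2 <= f A1)%R \/ Afinal = A2 /\ (f A1 <= f A2)%R) ->
  feasP21 grp alpha c (zOf grp OPT) Afinal /\ feasP2 grp alpha c Afinal.
Proof.
move=> _ _ _ _ _ _ feasA hXY A1 A2 choice.
have feas W : completes grp (zOf grp OPT) AP22 W ->
    feasP21 grp alpha c (zOf grp OPT) (completion grp (zOf grp OPT) AP22 W) /\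
    feasP2 grp alpha c (completion grp (zOf grp OPT) AP22 W).
  move=> hW; have feas21 := completion_feasP21 feasA hW.
  by split; last exact: feasP21_feasP2 feas21.
by case: choice => -[-> _]; apply: feas => i /hXY[].
Qed.
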